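(* Let $q\ge2$ and $d\ge2$ be integers and, for $\beta\ge0$, $B\in\mathbb R$, $r\in\mathbb R$, let $$f(r;\beta,B)=B+(d-1)\log\Big(\frac{e^{\beta+r}+q-1}{e^r+e^\beta+q-2}\Big).$$ There exists $\beta_-\in(0,\infty]$ (with $\beta_-=\infty$ if $d=2$ and $\beta_-<\infty$ if $d>2$) such that: for $0\le\beta\le\beta_-$ the map $r\mapsto f(r;\beta,B)$ has exactly one fixed point for every $B\in\mathbb R$; and for $\beta>\beta_-$ there exist real numbers $B_-(\beta)<B_+(\beta)$, depending smoothly on $\beta$, such that $f(\cdot;\beta,B)$ has exactly one fixed point if $B\notin[B_-(\beta),B_+(\beta)]$, exactly two if $B\in\{B_-(\beta),B_+(\beta)\}$, and exactly three if $B\in(B_-(\beta),B_+(\beta))$. When $\beta_-<\infty$, $B_\pm$ extend continuously to $\beta_-$ with $B_-(\beta_-)=B_+(\beta_-)$.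
   Context: No additional definitions are needed beyond the formula for $f$. *)

From Stdlib Require Import Reals Lra Lia List.
Open Scope R_scope.

Definition fmap (q d : nat) (beta B r : R) : R :=
  B + (INR d - 1) *
      ln ((exp (beta + r) + INR q - 1) / (exp r + exp beta + INR q - 2)).

Definition exactly_n_fixed_points (n : nat) (g : R -> R) : Prop :=
  exists l : list R, NoDup l /\ length l = n /\
    (forall r, In r l <-> g r = r).

Definition smooth_on_right_of (a : R) (g : R -> R) : Prop :=
  exists D : nat -> R -> R,
    (forall x, a < x -> D O x = g x) /\
    (forall n x, a < x -> derivable_pt_lim (D n) x (D (S n) x)).

From Stdlib Require Import Reals Lra Lia List.
Open Scope R_scope.

(* Put c = q - 1, k = d - 1, a = e^beta, t = e^r.  The fixed points of
   f(.; beta, B) are the solutions of phi_beta(r) = B, where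
   phi_beta(r) = r - k ln((a t + c) / (t + a + c - 1)).  For beta >= 0,
   phi_beta is continuous and stays within bounded distance of the identity,
   and phi_beta'(r) has the sign of the quadratic
   Q_a(t) = (a t + c)(t + a + c - 1) - k t (a - 1)(a + c), which satisfies
   4 a Q_a(t) = (2 a t - M)^2 - D with D = ((k-1)^2 u - (k+1)^2 c)(u - c),
   u = a (a + c - 1) and M = (k-1) u - (k+1) c.
   - If (k-1)^2 u <= (k+1)^2 c then D <= 0 and phi_beta is strictly
     increasing: one fixed point.  This holds for all beta when k = 1 and for
     beta <= beta_- = ln a_- when k > 1, where u(a_-) = (k+1)^2 c / (k-1)^2.
   - If beta > beta_- then D, M > 0 and phi_beta increases, decreases between
     the roots t_- < t_+ of Q_a, and increases again; its local extrema
     B_+ = phi_beta(ln t_-) and B_- = phi_beta(ln t_+) give the 1/2/3 count.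
   B_+ and B_- are closed-form expressions in beta (exp, ln, sqrt, inverse);
   a small language of such expressions with a symbolic derivative gives their
   smoothness on (beta_-, +oo) and their continuity at beta_-, where D = 0
   and the two critical values coincide. *)

Inductive expr : Type :=
  | EVar | ECst (v : R) | EAdd (e1 e2 : expr) | EMul (e1 e2 : expr)
  | EExp (e : expr) | ELn (e : expr) | EInv (e : expr) | ESqrt (e : expr).

Fixpoint eval (e : expr) (x : R) : R :=
  match e with
  | EVar => x
  | ECst v => v
  | EAdd e1 e2 => eval e1 x + eval e2 x
  | EMul e1 e2 => eval e1 x * eval e2 x
  | EExp e => exp (eval e x)
  | ELn e => ln (eval e x)
  | EInv e => / eval e x
  | ESqrt e => sqrt (eval e x)
  end.

Fixpoint deriv (e : expr) : expr :=
  match e with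
  | EVar => ECst 1
  | ECst _ => ECst 0
  | EAdd e1 e2 => EAdd (deriv e1) (deriv e2)
  | EMul e1 e2 => EAdd (EMul (deriv e1) e2) (EMul e1 (deriv e2))
  | EExp e => EMul (deriv e) (EExp e)
  | ELn e => EMul (deriv e) (EInv e)
  | EInv e => EMul (ECst (-1)) (EMul (deriv e) (EMul (EInv e) (EInv e)))
  | ESqrt e => EMul (deriv e) (EInv (EMul (ECst 2) (ESqrt e)))
  end.

(* With S = (0 <) this guarantees differentiability,
   with S = (0 <=) continuity. *)
Fixpoint admissible (S : R -> Prop) (e : expr) (x : R) : Prop :=
  match e with
  | EVar | ECst _ => True
  | EAdd e1 e2 | EMul e1 e2 => admissible S e1 x /\ admissible S e2 x
  | EExp e => admissible S e x
  | ELn e => admissible S e x /\ 0 < eval e x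
  | EInv e => admissible S e x /\ eval e x <> 0
  | ESqrt e => admissible S e x /\ S (eval e x)
  end.

Lemma admissible_deriv (e : expr) (x : R) :
  admissible (Rlt 0) e x -> admissible (Rlt 0) (deriv e) x.
Proof.
  induction e; simpl; intros H; repeat split;
    repeat match goal with H : _ /\ _ |- _ => destruct H end; auto.
  all: assert (0 < sqrt (eval e x)) by (apply sqrt_lt_R0; auto); lra.
Qed.

Lemma eval_deriv (e : expr) (x : R) :
  admissible (Rlt 0) e x -> derivable_pt_lim (eval e) x (eval (deriv e) x).
Proof.
  induction e; simpl; intros H.
  - apply derivable_pt_lim_id.
  - apply derivable_pt_lim_const.
  - destruct H. apply (derivable_pt_lim_plus (eval e1) (eval e2)); auto.
  - destruct H. apply (derivable_pt_lim_mult (eval e1) (eval e2)); auto.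
  - rewrite Rmult_comm.
    apply (derivable_pt_lim_comp (eval e) exp); auto.
    apply derivable_pt_lim_exp.
  - destruct H. rewrite Rmult_comm.
    apply (derivable_pt_lim_comp (eval e) ln); auto.
    apply derivable_pt_lim_ln; auto.
  - destruct H as [He Hne].
    apply derivable_pt_lim_ext with (f := (fct_cte 1 / eval e)%F).
    { intro y. unfold div_fct, fct_cte, Rdiv. ring. }
    replace (-1 * (eval (deriv e) x * (/ eval e x * / eval e x)))
      with ((0 * eval e x - eval (deriv e) x * fct_cte 1 x) / (eval e x)²)
      by (unfold fct_cte, Rsqr; field; auto).
    apply derivable_pt_lim_div; auto. apply derivable_pt_lim_const.
  - destruct H.
    replace (eval (deriv e) x * / (2 * sqrt (eval e x)))
      with (/ (2 * sqrt (eval e x)) * eval (deriv e) x) by ring.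
    apply (derivable_pt_lim_comp (eval e) sqrt); auto.
    apply derivable_pt_lim_sqrt; auto.
Qed.

Lemma eval_continuous (e : expr) (x : R) :
  admissible (Rle 0) e x -> continuity_pt (eval e) x.
Proof.
  induction e; simpl; intros H.
  - apply derivable_continuous_pt. exists 1. apply derivable_pt_lim_id.
  - apply continuity_pt_const. intros a b; reflexivity.
  - destruct H. apply (continuity_pt_plus (eval e1) (eval e2)); auto.
  - destruct H. apply (continuity_pt_mult (eval e1) (eval e2)); auto.
  - apply (continuity_pt_comp (eval e) exp); auto.
    apply derivable_continuous_pt. exists (exp (eval e x)).
    apply derivable_pt_lim_exp.
  - destruct H. apply (continuity_pt_comp (eval e) ln); auto.
    apply derivable_continuous_pt. exists (/ eval e x).
    apply derivable_pt_lim_ln; auto.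
  - destruct H. apply (continuity_pt_inv (eval e)); auto.
  - destruct H. apply (continuity_pt_comp (eval e) sqrt); auto.
    apply continuity_pt_sqrt; auto.
Qed.

Lemma eval_smooth (b : R) (e : expr) :
  (forall x, b < x -> admissible (Rlt 0) e x) -> smooth_on_right_of b (eval e).
Proof.
  intros H. exists (fun n => eval (Nat.iter n deriv e)). split.
  - reflexivity.
  - intros n x Hx. apply eval_deriv.
    induction n; simpl; auto. apply admissible_deriv; auto.
Qed.

Definition solutions (n : nat) (g : R -> R) (B : R) : Prop :=
  exists l : list R, NoDup l /\ length l = n /\ (forall r, In r l <-> g r = B).

Lemma solutions_1 (g : R -> R) (B z : R) :
  g z = B -> (forall r, g r = B -> r = z) -> solutions 1 g B.
Proof.
  intros Hz Hall. exists (z :: nil). split; [|split; [reflexivity|]].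
  - repeat constructor. simpl; tauto.
  - intro r; simpl; split.
    + intros [<- | []]; exact Hz.
    + intro Hr; left; symmetry; auto.
Qed.

Lemma solutions_2 (g : R -> R) (B z1 z2 : R) :
  z1 < z2 -> g z1 = B -> g z2 = B ->
  (forall r, g r = B -> r = z1 \/ r = z2) -> solutions 2 g B.
Proof.
  intros H12 Hz1 Hz2 Hall. exists (z1 :: z2 :: nil). split; [|split; [reflexivity|]].
  - constructor; [simpl; intros [E | []]; lra|]. repeat constructor. simpl; tauto.
  - intro r; simpl; split.
    + intros [<- | [<- | []]]; auto.
    + intro Hr. destruct (Hall r Hr); auto.
Qed.

Lemma solutions_3 (g : R -> R) (B z1 z2 z3 : R) :
  z1 < z2 -> z2 < z3 -> g z1 = B -> g z2 = B -> g z3 = B ->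
  (forall r, g r = B -> r = z1 \/ r = z2 \/ r = z3) -> solutions 3 g B.
Proof.
  intros H12 H23 Hz1 Hz2 Hz3 Hall.
  exists (z1 :: z2 :: z3 :: nil). split; [|split; [reflexivity|]].
  - constructor; [simpl; intros [E | [E | []]]; lra|].
    constructor; [simpl; intros [E | []]; lra|]. repeat constructor. simpl; tauto.
  - intro r; simpl; split.
    + intros [<- | [<- | [<- | []]]]; auto.
    + intro Hr. destruct (Hall r Hr) as [E | [E | E]]; auto.
Qed.

Lemma ivt_value (g : R -> R) (x y B : R) :
  continuity g -> x <= y -> (g x - B) * (g y - B) <= 0 ->
  exists z, x <= z <= y /\ g z = B.
Proof.
  intros Hg Hxy HB.
  destruct (IVT_cor (fun r => g r - B) x y) as [z [Hz Ez]]; auto.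
  - apply continuity_minus; auto. apply continuity_const. intros a b; reflexivity.
  - exists z. split; auto. lra.
Qed.

Definition increasing_on (S : R -> Prop) (g : R -> R) : Prop :=
  forall x y, S x -> S y -> x < y -> g x < g y.
Definition decreasing_on (S : R -> Prop) (g : R -> R) : Prop :=
  forall x y, S x -> S y -> x < y -> g y < g x.

Lemma increasing_on_le (S : R -> Prop) (g : R -> R) (x y : R) :
  increasing_on S g -> S x -> S y -> x <= y -> g x <= g y.
Proof.
  intros Hg Hx Hy [H | ->]; [left; apply Hg | right]; auto.
Qed.

Lemma decreasing_on_le (S : R -> Prop) (g : R -> R) (x y : R) :
  decreasing_on S g -> S x -> S y -> x <= y -> g y <= g x.
Proof.
  intros Hg Hx Hy [H | ->]; [left; apply Hg | right]; auto.
Qed.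

Lemma increasing_on_inj (S : R -> Prop) (g : R -> R) (x y : R) :
  increasing_on S g -> S x -> S y -> g x = g y -> x = y.
Proof.
  intros Hg Hx Hy E. destruct (Rtotal_order x y) as [H | [H | H]]; auto.
  - pose proof (Hg x y Hx Hy H); lra.
  - pose proof (Hg y x Hy Hx H); lra.
Qed.

Lemma decreasing_on_inj (S : R -> Prop) (g : R -> R) (x y : R) :
  decreasing_on S g -> S x -> S y -> g x = g y -> x = y.
Proof.
  intros Hg Hx Hy E. destruct (Rtotal_order x y) as [H | [H | H]]; auto.
  - pose proof (Hg x y Hx Hy H); lra.
  - pose proof (Hg y x Hy Hx H); lra.
Qed.

Section Counting.
Variable g : R -> R.
Hypothesis g_cont : continuity g.
Hypothesis g_unbounded_below : forall B, exists x, g x < B.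
Hypothesis g_unbounded_above : forall B, exists x, B < g x.

Lemma solutions_of_increasing :
  (forall x y, x < y -> g x < g y) -> forall B, solutions 1 g B.
Proof.
  intros Hg B.
  assert (Hinc : increasing_on (fun _ => True) g) by (intros x y _ _; apply Hg).
  destruct (g_unbounded_below B) as [x Hx], (g_unbounded_above B) as [y Hy].
  assert (Hxy : x <= y).
  { destruct (Rle_or_lt x y) as [H | H]; auto. pose proof (Hg y x H); lra. }
  destruct (ivt_value g x y B g_cont Hxy) as [z [_ Hz]]; [nra|].
  apply (solutions_1 g B z Hz).
  intros r Hr. apply (increasing_on_inj _ g r z Hinc); auto. congruence.
Qed.

Variables r1 r2 : R.
Hypothesis r1_lt_r2 : r1 < r2.
Hypothesis g_incr_left : increasing_on (fun r => r <= r1) g.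
Hypothesis g_decr_mid : decreasing_on (fun r => r1 <= r <= r2) g.
Hypothesis g_incr_right : increasing_on (fun r => r2 <= r) g.

Lemma local_min_lt_max : g r2 < g r1.
Proof. apply g_decr_mid; lra. Qed.

Lemma below_local_max (r : R) : r <= r2 -> g r <= g r1.
Proof.
  intro Hr. destruct (Rle_or_lt r r1).
  - apply (increasing_on_le _ g r r1 g_incr_left); lra.
  - apply (decreasing_on_le _ g r1 r g_decr_mid); lra.
Qed.

Lemma above_local_min (r : R) : r1 <= r -> g r2 <= g r.
Proof.
  intro Hr. destruct (Rle_or_lt r r2).
  - apply (decreasing_on_le _ g r r2 g_decr_mid); lra.
  - apply (increasing_on_le _ g r2 r g_incr_right); lra.
Qed.

Lemma left_branch_hits (B : R) : B <= g r1 -> exists z, z <= r1 /\ g z = B.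
Proof.
  intro HB. destruct (g_unbounded_below (Rmin B (g r2))) as [x Hx].
  pose proof (Rmin_l B (g r2)); pose proof (Rmin_r B (g r2)).
  assert (Hxr : x <= r1).
  { destruct (Rle_or_lt x r1) as [Hle | Hgt]; auto.
    pose proof (above_local_min x ltac:(lra)); lra. }
  destruct (ivt_value g x r1 B g_cont Hxr) as [z [Hz Ez]]; [nra|].
  exists z; split; [lra | exact Ez].
Qed.

Lemma middle_branch_hits (B : R) :
  g r2 <= B <= g r1 -> exists z, r1 <= z <= r2 /\ g z = B.
Proof. intro HB. apply ivt_value; auto; [lra | nra]. Qed.

Lemma right_branch_hits (B : R) : g r2 <= B -> exists z, r2 <= z /\ g z = B.
Proof.
  intro HB. destruct (g_unbounded_above (Rmax B (g r1))) as [x Hx].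
  pose proof (Rmax_l B (g r1)); pose proof (Rmax_r B (g r1)).
  assert (Hxr : r2 <= x).
  { destruct (Rle_or_lt r2 x) as [Hle | Hgt]; auto.
    pose proof (below_local_max x ltac:(lra)); lra. }
  destruct (ivt_value g r2 x B g_cont Hxr) as [z [Hz Ez]]; [nra|].
  exists z; split; [lra | exact Ez].
Qed.

Lemma up_down_up_solutions (B : R) :
  ((B < g r2 \/ g r1 < B) -> solutions 1 g B) /\
  ((B = g r2 \/ B = g r1) -> solutions 2 g B) /\
  (g r2 < B < g r1 -> solutions 3 g B).
Proof.
  pose proof local_min_lt_max as Hmax.
  pose proof below_local_max as Hbelow; pose proof above_local_min as Habove.
  split; [|split].
  - intros [HB | HB].
    + destruct (left_branch_hits B) as [z [Hz Ez]]; [lra|].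
      apply (solutions_1 g B z Ez). intros r Hr.
      assert (r <= r1) by (destruct (Rle_or_lt r r1); auto; pose proof (Habove r); lra).
      apply (increasing_on_inj _ g _ _ g_incr_left); auto; congruence.
    + destruct (right_branch_hits B) as [z [Hz Ez]]; [lra|].
      apply (solutions_1 g B z Ez). intros r Hr.
      assert (r2 <= r) by (destruct (Rle_or_lt r2 r); auto; pose proof (Hbelow r); lra).
      apply (increasing_on_inj _ g _ _ g_incr_right); auto; congruence.
  - intros [HB | HB].
    + destruct (left_branch_hits B) as [z [Hz Ez]]; [lra|].
      assert (z <> r1) by (intros ->; lra).
      apply (solutions_2 g B z r2); auto; [lra|]. intros r Hr.
      destruct (Rle_or_lt r r1).
      * left. apply (increasing_on_inj _ g _ _ g_incr_left); auto; congruence.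
      * right. destruct (Rle_or_lt r r2).
        -- apply (decreasing_on_inj _ g _ _ g_decr_mid); [lra | lra | congruence].
        -- apply (increasing_on_inj _ g _ _ g_incr_right); [lra | lra | congruence].
    + destruct (right_branch_hits B) as [z [Hz Ez]]; [lra|].
      assert (z <> r2) by (intros ->; lra).
      apply (solutions_2 g B r1 z); auto; [lra|]. intros r Hr.
      destruct (Rle_or_lt r2 r).
      * right. apply (increasing_on_inj _ g _ _ g_incr_right); auto; congruence.
      * left. destruct (Rle_or_lt r r1).
        -- apply (increasing_on_inj _ g _ _ g_incr_left); [lra | lra | congruence].
        -- apply (decreasing_on_inj _ g _ _ g_decr_mid); [lra | lra | congruence].
  - intros HB.
    destruct (left_branch_hits B) as [z1 [Hz1 Ez1]]; [lra|].
    destruct (middle_branch_hits B) as [z2 [Hz2 Ez2]]; [lra|].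
    destruct (right_branch_hits B) as [z3 [Hz3 Ez3]]; [lra|].
    assert (z1 <> r1) by (intros ->; lra).
    assert (z2 <> r1 /\ z2 <> r2) by (split; intros ->; lra).
    assert (z3 <> r2) by (intros ->; lra).
    apply (solutions_3 g B z1 z2 z3); auto; try lra. intros r Hr.
    destruct (Rle_or_lt r r1) as [Hr1 | Hr1]; [|destruct (Rle_or_lt r r2) as [Hr2 | Hr2]].
    + left. apply (increasing_on_inj _ g _ _ g_incr_left); auto; congruence.
    + right; left. apply (decreasing_on_inj _ g _ _ g_decr_mid); [lra | lra | congruence].
    + right; right. apply (increasing_on_inj _ g _ _ g_incr_right); [lra | lra | congruence].
Qed.

End Counting.


Lemma increasing_of_deriv (g g' : R -> R) (x y : R) :
  (forall z, derivable_pt_lim g z (g' z)) -> x < y ->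
  (forall z, x < z < y -> 0 < g' z) -> g x < g y.
Proof.
  intros Hd Hxy Hpos.
  destruct (MVT_cor2 g g' x y Hxy) as [z [Ez Hz]]; auto.
  pose proof (Hpos z Hz); nra.
Qed.

Lemma decreasing_of_deriv (g g' : R -> R) (x y : R) :
  (forall z, derivable_pt_lim g z (g' z)) -> x < y ->
  (forall z, x < z < y -> g' z < 0) -> g y < g x.
Proof.
  intros Hd Hxy Hneg.
  destruct (MVT_cor2 g g' x y Hxy) as [z [Ez Hz]]; auto.
  pose proof (Hneg z Hz); nra.
Qed.

Lemma increasing_except_at (g g' : R -> R) (r0 : R) :
  (forall z, derivable_pt_lim g z (g' z)) -> (forall z, z <> r0 -> 0 < g' z) ->
  forall x y, x < y -> g x < g y.
Proof.
  intros Hd Hpos x y Hxy.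
  assert (Hpiece : forall u v, u < v -> (r0 <= u \/ v <= r0) -> g u < g v).
  { intros u v Huv Hr0. apply (increasing_of_deriv g g'); auto.
    intros z Hz. apply Hpos. lra. }
  destruct (Rle_or_lt r0 x); [apply Hpiece; lra|].
  destruct (Rle_or_lt y r0); [apply Hpiece; lra|].
  apply Rlt_trans with (g r0); apply Hpiece; lra.
Qed.

Lemma ln_le (x y : R) : 0 < x -> x <= y -> ln x <= ln y.
Proof. intros Hx [H | ->]; [left; apply ln_increasing | right]; auto. Qed.

Lemma exp_lt_of_lt_ln (z t : R) : 0 < t -> z < ln t -> exp z < t.
Proof. intros Ht Hz. rewrite <- (exp_ln t Ht). apply exp_increasing; auto. Qed.

Lemma lt_exp_of_ln_lt (z t : R) : 0 < t -> ln t < z -> t < exp z.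
Proof. intros Ht Hz. rewrite <- (exp_ln t Ht). apply exp_increasing; auto. Qed.

Section PottsMap.
Variables c k : R.
Hypothesis c_ge_1 : 1 <= c.
Hypothesis k_ge_1 : 1 <= k.

Definition phi (beta r : R) : R :=
  r - k * ln ((exp (beta + r) + c) / (exp r + exp beta + c - 1)).

(* phi_beta' has the sign of the quadratic Q_a(t); its discriminant-type
   quantities are expressed through u = a (a + c - 1). *)
Definition u (a : R) : R := a * (a + (c - 1)).
Definition M (a : R) : R := (k - 1) * u a - (k + 1) * c.
Definition D (a : R) : R := M a ^ 2 - 4 * c * u a.
Definition Q (a t : R) : R :=
  (a * t + c) * (t + a + c - 1) - k * t * (a - 1) * (a + c).

Lemma Q_square (a t : R) : 4 * a * Q a t = (2 * a * t - M a) ^ 2 - D a.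
Proof. unfold Q, D, M, u. ring. Qed.

(* The sign of D: for u >= c, D <= 0 exactly when (k-1)^2 u <= (k+1)^2 c. *)
Lemma D_factor (a : R) : D a = ((k - 1) ^ 2 * u a - (k + 1) ^ 2 * c) * (u a - c).
Proof. unfold D, M. ring. Qed.

Lemma u_ge_c (a : R) : 1 <= a -> c <= u a.
Proof. intro Ha. unfold u. nra. Qed.

Definition phiE (beta : R) : expr :=
  EAdd EVar (EMul (ECst (- k))
    (ELn (EMul (EAdd (EMul (ECst (exp beta)) (EExp EVar)) (ECst c))
               (EInv (EAdd (EExp EVar) (ECst (exp beta + c - 1))))))).

Lemma phi_eval (beta r : R) : phi beta r = eval (phiE beta) r.
Proof.
  unfold phi; simpl. rewrite exp_plus.
  assert (E : (exp beta * exp r + c) / (exp r + exp beta + c - 1)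
              = (exp beta * exp r + c) * / (exp r + (exp beta + c - 1)))
    by (unfold Rdiv; f_equal; f_equal; ring).
  rewrite E. ring.
Qed.

Lemma phiE_admissible (beta r : R) : admissible (Rlt 0) (phiE beta) r.
Proof.
  pose proof (exp_pos beta); pose proof (exp_pos r).
  simpl; repeat split; try lra.
  apply Rmult_lt_0_compat; [nra | apply Rinv_0_lt_compat; lra].
Qed.

Definition phi_slope (beta r : R) : R :=
  Q (exp beta) (exp r) / ((exp beta * exp r + c) * (exp r + exp beta + c - 1)).

Lemma phi_derivative (beta r : R) : derivable_pt_lim (phi beta) r (phi_slope beta r).
Proof.
  apply derivable_pt_lim_ext with (f := eval (phiE beta)).
  { intro z; symmetry; apply phi_eval. }
  replace (phi_slope beta r) with (eval (deriv (phiE beta)) r).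
  - apply eval_deriv, phiE_admissible.
  - pose proof (exp_pos beta); pose proof (exp_pos r).
    unfold phi_slope, Q; simpl. field. split; nra.
Qed.

Lemma phi_continuous (beta : R) : continuity (phi beta).
Proof.
  intro r. apply derivable_continuous_pt. exists (phi_slope beta r).
  apply phi_derivative.
Qed.

Lemma phi_slope_denominator_pos (beta r : R) :
  0 < (exp beta * exp r + c) * (exp r + exp beta + c - 1).
Proof. pose proof (exp_pos beta); pose proof (exp_pos r). apply Rmult_lt_0_compat; nra. Qed.

Lemma phi_slope_pos (beta r : R) : 0 < Q (exp beta) (exp r) -> 0 < phi_slope beta r.
Proof. intro HQ. apply Rdiv_lt_0_compat; auto. apply phi_slope_denominator_pos. Qed.

Lemma phi_slope_neg (beta r : R) : Q (exp beta) (exp r) < 0 -> phi_slope beta r < 0.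
Proof.
  intro HQ. pose proof (phi_slope_denominator_pos beta r) as Hden.
  unfold phi_slope, Rdiv. pose proof (Rinv_0_lt_compat _ Hden). nra.
Qed.

(* phi_beta stays within bounded distance of the identity, hence is
   unbounded in both directions. *)
Lemma phi_bounds (beta r : R) : 0 <= beta ->
  r - k * beta <= phi beta r <= r - k * ln (c / (exp beta + c - 1)).
Proof.
  intro Hb. pose proof (exp_ineq1_le beta); pose proof (exp_pos r).
  unfold phi. rewrite exp_plus.
  set (a := exp beta) in *; set (t := exp r) in *.
  assert (Hden : 0 < t + a + c - 1) by lra.
  assert (Hnum : 0 < a * t + c) by nra.
  assert (Hfrac : 0 < (a * t + c) / (t + a + c - 1)) by (apply Rdiv_lt_0_compat; auto).
  split.
  - assert (ln ((a * t + c) / (t + a + c - 1)) <= beta); [|nra].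
    replace beta with (ln a) by (unfold a; apply ln_exp).
    apply ln_le; auto.
    apply Rmult_le_reg_r with (t + a + c - 1); auto.
    unfold Rdiv. rewrite Rmult_assoc, Rinv_l by lra. nra.
  - assert (ln (c / (a + c - 1)) <= ln ((a * t + c) / (t + a + c - 1))); [|nra].
    apply ln_le; [apply Rdiv_lt_0_compat; lra|].
    apply Rmult_le_reg_r with ((t + a + c - 1) * (a + c - 1)); [nra|].
    unfold Rdiv.
    replace (c * / (a + c - 1) * ((t + a + c - 1) * (a + c - 1)))
      with (c * (t + a + c - 1)) by (field; lra).
    replace ((a * t + c) * / (t + a + c - 1) * ((t + a + c - 1) * (a + c - 1)))
      with ((a * t + c) * (a + c - 1)) by (field; lra).
    assert (0 <= (a - 1) * (a + c) * t) by (apply Rmult_le_pos; [apply Rmult_le_pos|]; lra).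
    nra.
Qed.

Lemma phi_unbounded_below (beta : R) : 0 <= beta -> forall B, exists r, phi beta r < B.
Proof.
  intros Hb B. set (r := B + k * ln (c / (exp beta + c - 1)) - 1).
  exists r. pose proof (phi_bounds beta r Hb). unfold r in *. lra.
Qed.

Lemma phi_unbounded_above (beta : R) : 0 <= beta -> forall B, exists r, B < phi beta r.
Proof.
  intros Hb B. exists (B + k * beta + 1).
  pose proof (phi_bounds beta (B + k * beta + 1) Hb). lra.
Qed.

(* If D(a) <= 0, the quadratic Q_a is positive except at its double root,
   so phi_beta is strictly increasing and every level is attained once. *)
Lemma unique_solution (beta : R) :
  0 <= beta -> (k - 1) ^ 2 * u (exp beta) <= (k + 1) ^ 2 * c ->
  forall B, solutions 1 (phi beta) B.
Proof.
  intros Hb Hthr. pose proof (exp_ineq1_le beta) as Ha.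
  set (a := exp beta) in *.
  assert (HD : D a <= 0).
  { rewrite D_factor. pose proof (u_ge_c a ltac:(lra)). nra. }
  apply solutions_of_increasing;
    [apply phi_continuous | apply phi_unbounded_below | apply phi_unbounded_above |]; auto.
  apply (increasing_except_at _ (phi_slope beta) (ln (M a / (2 * a))));
    [apply phi_derivative|].
  intros r Hr. apply phi_slope_pos. fold a.
  assert (Hsq : 2 * a * exp r - M a <> 0).
  { intro E. apply Hr. rewrite <- (ln_exp r). f_equal.
    replace (M a) with (2 * a * exp r) by lra. field. lra. }
  assert (0 < 4 * a * Q a (exp r)); [|nra].
  rewrite Q_square. pose proof (Rsqr_pos_lt _ Hsq). unfold Rsqr in *. nra.
Qed.

(* When D(a) > 0 the critical points of phi_beta are e^r = t_-, t_+ with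
   t_s = (M + s sqrt D) / 2a, s = -1, 1. *)
Definition tcrit (s a : R) : R := (M a + s * sqrt (D a)) / (2 * a).

Lemma tcrit_pos (s a : R) : 0 < a -> 0 < M a -> -1 <= s -> 0 < tcrit s a.
Proof.
  intros Ha HM Hs. unfold tcrit.
  assert (Hu : 0 < u a) by (unfold u; nra).
  assert (Hroot : sqrt (D a) < M a).
  { destruct (Rle_or_lt 0 (D a)) as [HD | HD].
    - pose proof (sqrt_sqrt _ HD); pose proof (sqrt_pos (D a)).
      unfold D in *. nra.
    - rewrite sqrt_neg_0; lra. }
  pose proof (sqrt_pos (D a)).
  apply Rdiv_lt_0_compat; nra.
Qed.

Lemma Q_roots (a t : R) : 0 < a -> 0 <= D a ->
  Q a t = a * (t - tcrit (-1) a) * (t - tcrit 1 a).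
Proof.
  intros Ha HD. unfold tcrit.
  pose proof (sqrt_sqrt _ HD) as Hs. set (s := sqrt (D a)) in *.
  transitivity (a * t * t - M a * t + (M a * M a - s * s) / (4 * a)).
  - rewrite Hs. unfold D, Q, M, u. field. lra.
  - field. lra.
Qed.

Section TwoCriticalPoints.
Variable beta : R.
Hypothesis beta_nonneg : 0 <= beta.
Hypothesis D_pos : 0 < D (exp beta).
Hypothesis M_pos : 0 < M (exp beta).

Lemma critical_points_order : 0 < tcrit (-1) (exp beta) < tcrit 1 (exp beta).
Proof.
  pose proof (exp_pos beta). split; [apply tcrit_pos; auto; lra|].
  unfold tcrit. pose proof (sqrt_lt_R0 _ D_pos).
  apply Rmult_lt_compat_r; [apply Rinv_0_lt_compat|]; lra.
Qed.

Lemma phi_increasing_left :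
  increasing_on (fun r => r <= ln (tcrit (-1) (exp beta))) (phi beta).
Proof.
  pose proof critical_points_order. pose proof (exp_pos beta).
  intros x y _ Hy Hxy. apply (increasing_of_deriv _ (phi_slope beta)); auto.
  { intro; apply phi_derivative. }
  intros z Hz. apply phi_slope_pos. rewrite Q_roots by lra.
  pose proof (exp_lt_of_lt_ln z (tcrit (-1) (exp beta)) ltac:(lra) ltac:(lra)).
  assert (0 < exp beta * (tcrit (-1) (exp beta) - exp z)) by (apply Rmult_lt_0_compat; lra).
  nra.
Qed.

Lemma phi_decreasing_middle :
  decreasing_on (fun r => ln (tcrit (-1) (exp beta)) <= r <= ln (tcrit 1 (exp beta)))
    (phi beta).
Proof.
  pose proof critical_points_order. pose proof (exp_pos beta).
  intros x y Hx Hy Hxy. apply (decreasing_of_deriv _ (phi_slope beta)); auto.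
  { intro; apply phi_derivative. }
  intros z Hz. apply phi_slope_neg. rewrite Q_roots by lra.
  pose proof (lt_exp_of_ln_lt z (tcrit (-1) (exp beta)) ltac:(lra) ltac:(lra)).
  pose proof (exp_lt_of_lt_ln z (tcrit 1 (exp beta)) ltac:(lra) ltac:(lra)).
  assert (0 < exp beta * (exp z - tcrit (-1) (exp beta))) by (apply Rmult_lt_0_compat; lra).
  nra.
Qed.

Lemma phi_increasing_right :
  increasing_on (fun r => ln (tcrit 1 (exp beta)) <= r) (phi beta).
Proof.
  pose proof critical_points_order. pose proof (exp_pos beta).
  intros x y Hx _ Hxy. apply (increasing_of_deriv _ (phi_slope beta)); auto.
  { intro; apply phi_derivative. }
  intros z Hz. apply phi_slope_pos. rewrite Q_roots by lra.
  pose proof (lt_exp_of_ln_lt z (tcrit 1 (exp beta)) ltac:(lra) ltac:(lra)).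
  apply Rmult_lt_0_compat; [apply Rmult_lt_0_compat|]; lra.
Qed.

Lemma three_regimes (B : R) :
  let Bmin := phi beta (ln (tcrit 1 (exp beta))) in
  let Bmax := phi beta (ln (tcrit (-1) (exp beta))) in
  Bmin < Bmax /\
  ((B < Bmin \/ Bmax < B) -> solutions 1 (phi beta) B) /\
  ((B = Bmin \/ B = Bmax) -> solutions 2 (phi beta) B) /\
  (Bmin < B < Bmax -> solutions 3 (phi beta) B).
Proof.
  destruct critical_points_order as [Hm Hmp].
  assert (Hln : ln (tcrit (-1) (exp beta)) < ln (tcrit 1 (exp beta)))
    by (apply ln_increasing; auto).
  split.
  - apply (local_min_lt_max (phi beta)); auto using phi_decreasing_middle.
  - apply up_down_up_solutions;
      auto using phi_continuous, phi_unbounded_below, phi_unbounded_above,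
        phi_increasing_left, phi_decreasing_middle, phi_increasing_right.
Qed.

End TwoCriticalPoints.

(* The critical values phi_beta(ln t_s) as closed-form expressions in beta. *)
Definition aE : expr := EExp EVar.
Definition uE : expr := EMul aE (EAdd aE (ECst (c - 1))).
Definition ME : expr := EAdd (EMul (ECst (k - 1)) uE) (ECst (- ((k + 1) * c))).
Definition DE : expr := EAdd (EMul ME ME) (EMul (ECst (- (4 * c))) uE).
Definition tE (s : R) : expr :=
  EMul (EAdd ME (EMul (ECst s) (ESqrt DE))) (EInv (EMul (ECst 2) aE)).
Definition phi_at_log (T : expr) : expr :=
  EAdd (ELn T) (EMul (ECst (- k))
    (ELn (EMul (EAdd (EMul aE T) (ECst c))
               (EInv (EAdd T (EAdd aE (ECst (c - 1)))))))).

Definition critical_value (s beta : R) : R := eval (phi_at_log (tE s)) beta.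

Lemma eval_ME (x : R) : eval ME x = M (exp x).
Proof. unfold M, u; simpl. ring. Qed.

Lemma eval_DE (x : R) : eval DE x = D (exp x).
Proof. unfold DE. cbn [eval]. rewrite eval_ME. unfold D, u; simpl. ring. Qed.

Lemma eval_tE (s x : R) : eval (tE s) x = tcrit s (exp x).
Proof. unfold tE. cbn [eval]. rewrite eval_ME, eval_DE. unfold tcrit, aE, Rdiv; simpl. ring. Qed.

Lemma critical_value_eq (s beta : R) : 0 < tcrit s (exp beta) ->
  critical_value s beta = phi beta (ln (tcrit s (exp beta))).
Proof.
  intro Ht. unfold critical_value, phi_at_log, phi. cbn [eval]. rewrite eval_tE.
  unfold aE; simpl. rewrite exp_plus, exp_ln by auto.
  assert (E : (exp beta * tcrit s (exp beta) + c) / (tcrit s (exp beta) + exp beta + c - 1)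
      = (exp beta * tcrit s (exp beta) + c) * / (tcrit s (exp beta) + (exp beta + (c - 1))))
    by (unfold Rdiv; f_equal; f_equal; ring).
  rewrite E. ring.
Qed.

Lemma tE_admissible (S : R -> Prop) (s x : R) : S (D (exp x)) -> admissible S (tE s) x.
Proof.
  intro HS. pose proof (exp_pos x).
  unfold tE. cbn [admissible eval]. rewrite eval_DE. unfold aE; simpl.
  repeat split; auto; lra.
Qed.

Lemma phi_at_log_admissible (S : R -> Prop) (T : expr) (x : R) :
  admissible S T x -> 0 < eval T x -> admissible S (phi_at_log T) x.
Proof.
  intros HT Hpos. pose proof (exp_pos x).
  unfold phi_at_log, aE; simpl. repeat split; auto; try lra.
  apply Rmult_lt_0_compat; [nra | apply Rinv_0_lt_compat; lra].
Qed.

Lemma critical_value_admissible (S : R -> Prop) (s beta : R) :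
  S (D (exp beta)) -> 0 < tcrit s (exp beta) -> admissible S (phi_at_log (tE s)) beta.
Proof.
  intros HS Ht. apply phi_at_log_admissible; [apply tE_admissible; auto|].
  rewrite eval_tE; auto.
Qed.

End PottsMap.

(* For k > 1 the threshold beta_- = ln a_-, where a_- > 1 solves
   u(a_-) = U := (k+1)^2 c / (k-1)^2, separates D <= 0 from D > 0. *)
Section Threshold.
Variables c k : R.
Hypothesis c_ge_1 : 1 <= c.
Hypothesis k_gt_1 : 1 < k.

Definition U_crit : R := (k + 1) ^ 2 * c / (k - 1) ^ 2.
Definition a_minus : R := (sqrt ((c - 1) ^ 2 + 4 * U_crit) - (c - 1)) / 2.
Definition beta_minus : R := ln a_minus.

Lemma scaled_U_crit : (k - 1) ^ 2 * U_crit = (k + 1) ^ 2 * c.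
Proof. unfold U_crit. field. lra. Qed.

Lemma U_crit_gt_c : c < U_crit.
Proof.
  unfold U_crit. apply Rmult_lt_reg_r with ((k - 1) ^ 2); [nra|].
  unfold Rdiv. rewrite Rmult_assoc, Rinv_l by nra. nra.
Qed.

Lemma u_a_minus : u c a_minus = U_crit.
Proof.
  pose proof U_crit_gt_c. unfold u, a_minus.
  assert (Hs : sqrt ((c - 1) ^ 2 + 4 * U_crit) ^ 2 = (c - 1) ^ 2 + 4 * U_crit)
    by (rewrite <- Rsqr_pow2; apply Rsqr_sqrt; nra).
  set (s := sqrt ((c - 1) ^ 2 + 4 * U_crit)) in *.
  replace ((s - (c - 1)) / 2 * ((s - (c - 1)) / 2 + (c - 1)))
    with ((s ^ 2 - (c - 1) ^ 2) / 4) by field.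
  rewrite Hs. field.
Qed.

Lemma a_minus_gt_1 : 1 < a_minus.
Proof.
  pose proof U_crit_gt_c. unfold a_minus.
  assert (Hs : sqrt ((c - 1) ^ 2 + 4 * U_crit) ^ 2 = (c - 1) ^ 2 + 4 * U_crit)
    by (rewrite <- Rsqr_pow2; apply Rsqr_sqrt; nra).
  pose proof (sqrt_pos ((c - 1) ^ 2 + 4 * U_crit)).
  set (s := sqrt ((c - 1) ^ 2 + 4 * U_crit)) in *. nra.
Qed.

Lemma beta_minus_pos : 0 < beta_minus.
Proof. unfold beta_minus. rewrite <- ln_1. apply ln_increasing; [lra | apply a_minus_gt_1]. Qed.

Lemma u_increasing (a1 a2 : R) : 0 < a1 -> a1 <= a2 -> u c a1 <= u c a2.
Proof. intros. unfold u. nra. Qed.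

Lemma u_strictly_increasing (a1 a2 : R) : 0 < a1 -> a1 < a2 -> u c a1 < u c a2.
Proof. intros. unfold u. nra. Qed.

Lemma below_threshold (beta : R) : 0 <= beta -> beta <= beta_minus ->
  (k - 1) ^ 2 * u c (exp beta) <= (k + 1) ^ 2 * c.
Proof.
  intros H0 H1. pose proof a_minus_gt_1; pose proof (exp_ineq1_le beta).
  assert (exp beta <= a_minus).
  { rewrite <- (exp_ln a_minus) by lra.
    destruct H1 as [H1 | ->]; [left; apply exp_increasing; auto | right; auto]. }
  assert (Hu : u c (exp beta) <= U_crit)
    by (rewrite <- u_a_minus; apply u_increasing; lra).
  rewrite <- scaled_U_crit. apply Rmult_le_compat_l; [nra | exact Hu].
Qed.

Lemma M_pos_of_u_ge (a : R) : U_crit <= u c a -> 0 < M c k a.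
Proof.
  intro Hu. apply (Rmult_le_compat_l ((k - 1) ^ 2)) in Hu; [|nra].
  rewrite scaled_U_crit in Hu. pose proof U_crit_gt_c.
  unfold M. apply Rmult_lt_reg_l with (k - 1); [lra|]. nra.
Qed.

Lemma above_threshold (beta : R) : beta_minus < beta ->
  0 < D c k (exp beta) /\ 0 < M c k (exp beta).
Proof.
  intro Hb. pose proof a_minus_gt_1; pose proof U_crit_gt_c.
  assert (exp beta > a_minus)
    by (rewrite <- (exp_ln a_minus) by lra; apply exp_increasing; auto).
  assert (Hu : U_crit < u c (exp beta))
    by (rewrite <- u_a_minus; apply u_strictly_increasing; lra).
  split; [|apply M_pos_of_u_ge; lra].
  rewrite D_factor. apply Rmult_lt_0_compat; [|lra].
  apply (Rmult_lt_compat_l ((k - 1) ^ 2)) in Hu; [|nra].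
  rewrite scaled_U_crit in Hu. lra.
Qed.

Lemma at_threshold : D c k (exp beta_minus) = 0 /\ 0 < M c k (exp beta_minus).
Proof.
  pose proof a_minus_gt_1. unfold beta_minus. rewrite exp_ln by lra.
  split; [|apply M_pos_of_u_ge; rewrite u_a_minus; lra].
  rewrite D_factor, u_a_minus, scaled_U_crit. ring.
Qed.

Lemma large_beta (beta : R) : beta_minus < beta ->
  critical_value c k 1 beta < critical_value c k (-1) beta /\
  forall B,
    ((B < critical_value c k 1 beta \/ critical_value c k (-1) beta < B) ->
       solutions 1 (phi c k beta) B) /\
    ((B = critical_value c k 1 beta \/ B = critical_value c k (-1) beta) ->
       solutions 2 (phi c k beta) B) /\
    (critical_value c k 1 beta < B < critical_value c k (-1) beta ->
       solutions 3 (phi c k beta) B).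
Proof.
  intro Hb. pose proof beta_minus_pos. destruct (above_threshold beta Hb) as [HD HM].
  pose proof (exp_pos beta).
  rewrite !critical_value_eq by (apply tcrit_pos; auto; lra).
  assert (Hregimes := three_regimes c k c_ge_1 ltac:(lra) beta ltac:(lra) HD HM).
  split; [apply (Hregimes 0) | intro B; apply (Hregimes B)].
Qed.

Lemma critical_value_smooth (s : R) : -1 <= s ->
  smooth_on_right_of beta_minus (critical_value c k s).
Proof.
  intro Hs. apply eval_smooth. intros beta Hb.
  destruct (above_threshold beta Hb) as [HD HM].
  apply critical_value_admissible; auto. apply tcrit_pos; auto. apply exp_pos.
Qed.

Lemma critical_value_continuous_at_threshold (s : R) : -1 <= s ->
  continuity_pt (critical_value c k s) beta_minus.
Proof.
  intro Hs. destruct at_threshold as [HD HM]. apply eval_continuous.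
  apply critical_value_admissible; [exact c_ge_1 | rewrite HD; lra |].
  apply tcrit_pos; auto. apply exp_pos.
Qed.

(* At beta_- the two critical points merge, and so do B_- and B_+. *)
Lemma critical_values_meet :
  critical_value c k 1 beta_minus = critical_value c k (-1) beta_minus.
Proof.
  destruct at_threshold as [HD HM].
  assert (Ht : tcrit c k 1 (exp beta_minus) = tcrit c k (-1) (exp beta_minus))
    by (unfold tcrit, Rdiv; rewrite HD, sqrt_0; ring).
  rewrite !critical_value_eq by (apply tcrit_pos; auto; [apply exp_pos | lra]).
  rewrite Ht. reflexivity.
Qed.

End Threshold.

Lemma fixed_points_of_solutions (n q d : nat) (beta B : R) :
  solutions n (phi (INR q - 1) (INR d - 1) beta) B ->
  exactly_n_fixed_points n (fmap q d beta B).
Proof.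
  assert (Hphi : forall r, phi (INR q - 1) (INR d - 1) beta r = r - (fmap q d beta B r - B)).
  { intro r. unfold phi, fmap.
    replace (exp (beta + r) + (INR q - 1)) with (exp (beta + r) + INR q - 1) by ring.
    replace (exp r + exp beta + (INR q - 1) - 1) with (exp r + exp beta + INR q - 2) by ring.
    ring. }
  intros [l [Hl [Hlen Hin]]]. exists l. repeat split; auto.
  - intro Hr. apply Hin in Hr. rewrite Hphi in Hr. lra.
  - intro Hr. apply Hin. rewrite Hphi. lra.
Qed.

Lemma right_limit_of_continuous (g : R -> R) (b : R) :
  continuity_pt g b -> limit1_in g (fun x => b < x) (g b) b.
Proof.
  intros H eps Heps. destruct (H eps Heps) as [alp [Halp Hx]].
  exists alp. split; auto. intros x [Hbx Hdist]. apply Hx.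
  split; [split; [exact I | lra] | exact Hdist].
Qed.

Theorem mainTheorem18 :
  forall q d : nat, (2 <= q)%nat -> (2 <= d)%nat ->
  exists bm : option R,
    ((d = 2)%nat -> bm = None) /\
    ((2 < d)%nat -> bm <> None) /\
    (* for 0 <= beta <= beta_-, exactly one fixed point for every B *)
    (forall beta, 0 <= beta ->
       (bm = None \/ exists b, bm = Some b /\ beta <= b) ->
       forall B, exactly_n_fixed_points 1 (fmap q d beta B)) /\
    (forall b, bm = Some b ->
       0 < b /\
       exists Bm Bp : R -> R,
         (forall beta, b < beta -> Bm beta < Bp beta) /\
         smooth_on_right_of b Bm /\ smooth_on_right_of b Bp /\
         (forall beta B, b < beta ->
            ((B < Bm beta \/ Bp beta < B) ->
               exactly_n_fixed_points 1 (fmap q d beta B)) /\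
            ((B = Bm beta \/ B = Bp beta) ->
               exactly_n_fixed_points 2 (fmap q d beta B)) /\
            ((Bm beta < B < Bp beta) ->
               exactly_n_fixed_points 3 (fmap q d beta B))) /\
         (* continuous extension to beta_- with B_-(beta_-) = B_+(beta_-) *)
         exists Bc : R,
           limit1_in Bm (fun x => b < x) Bc b /\
           limit1_in Bp (fun x => b < x) Bc b).
Proof.
  intros q d Hq Hd.
  assert (Hc : 1 <= INR q - 1) by (apply le_INR in Hq; simpl in Hq; lra).
  destruct (Nat.eq_dec d 2) as [-> | Hd2].
  - (* d = 2, i.e. k = 1: D <= 0 for every beta >= 0 *)
    exists None. split; [reflexivity|]. split; [lia|]. split; [|discriminate].
    intros beta Hb _ B. apply fixed_points_of_solutions, unique_solution; auto;
      simpl; nra.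
  - assert (Hk : 1 < INR d - 1).
    { assert (H3 : (2 < d)%nat) by lia. apply lt_INR in H3. simpl in H3. lra. }
    exists (Some (beta_minus (INR q - 1) (INR d - 1))).
    split; [lia|]. split; [discriminate|]. split.
    + intros beta Hb [Hnone | [b [Hb' Hle]]]; [discriminate|]. injection Hb' as <-.
      intro B. apply fixed_points_of_solutions, unique_solution; auto; [lra|].
      apply below_threshold; auto.
    + intros b Hb. injection Hb as <-. split; [apply beta_minus_pos; auto|].
      exists (critical_value (INR q - 1) (INR d - 1) 1),
             (critical_value (INR q - 1) (INR d - 1) (-1)).
      split; [|split; [|split; [|split]]].
      * intros beta Hb. apply large_beta; auto.
      * apply critical_value_smooth; auto; lra.
      * apply critical_value_smooth; auto; lra.
      * intros beta B Hb.
        destruct (large_beta _ _ Hc Hk beta Hb) as [_ Hcount].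
        destruct (Hcount B) as (H1 & H2 & H3).
        split; [|split]; intro HB; apply fixed_points_of_solutions; auto.
      * exists (critical_value (INR q - 1) (INR d - 1) 1 (beta_minus (INR q - 1) (INR d - 1))).
        split; [|rewrite critical_values_meet by auto];
          apply right_limit_of_continuous, critical_value_continuous_at_threshold; auto; lra.
Qed.
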